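(* Let $\Gamma$ be a simple, undirected, connected graph with order $p\ge 2$, maximum degree $\Delta$ and domination number $\gamma(\Gamma)$. Then $$\gamma_{[3R]}(\Gamma)\ge\left\lceil\frac{2p+(\Delta-1)\gamma(\Gamma)}{\Delta}\right\rceil.$$ Moreover, this bound holds with equality for every such graph having a vertex adjacent to all other vertices.
   Context: $\gamma(\Gamma)$ is the minimum size of a set $S$ of vertices such that every vertex outside $S$ has a neighbour in $S$. For $h:V\to\{0,1,2,3,4\}$, let $AN(v)=\{w\in N(v):h(w)\ge 1\}$, $AN[v]=AN(v)\cup\{v\}$ and $h(S)=\sum_{u\in S}h(u)$; $h$ is a triple Roman dominating function (3RDF) if every $v$ with $h(v)<3$ satisfies $h(AN[v])\ge|AN(v)|+3$, and $\gamma_{[3R]}(\Gamma)$ is the minimum weight $h(V)$ of a 3RDF. *)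

From mathcomp Require Import all_boot all_order.
Set Implicit Arguments. Unset Strict Implicit. Unset Printing Implicit Defensive.

(* A simple undirected graph on a finite vertex type T is given by a
   symmetric irreflexive relation e : rel T (checked in the theorem). *)
Section Graph.
Variables (T : finType) (e : rel T).

Definition nbr (v : T) : {set T} := [set w | e v w].
Definition deg (v : T) : nat := #|nbr v|.
Definition maxdeg : nat := \max_(v : T) deg v.

Definition dominating (S : {set T}) : bool :=
  [forall v, (v \in S) || [exists w in S, e v w]].
(* gamma: minimum size of a dominating set (setT is dominating, so the
   default value #|T| is never below the true minimum) *)
Definition domination_number : nat :=
  \big[minn/#|T|]_(S : {set T} | dominating S) #|S|.

Definition AN (h : {ffun T -> 'I_5}) (v : T) : {set T} :=
  [set w in nbr v | 1 <= h w].
Definition hsum (h : {ffun T -> 'I_5}) (S : {set T}) : nat :=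
  \sum_(u in S) (h u : nat).
Definition is3RDF (h : {ffun T -> 'I_5}) : bool :=
  [forall v, (h v < 3) ==> (#|AN h v| + 3 <= hsum h (v |: AN h v))].
Definition weight (h : {ffun T -> 'I_5}) : nat := \sum_(v : T) (h v : nat).
(* triple Roman domination number (the constant function 4 is a 3RDF of
   weight 4 #|T|, so the default is harmless) *)
Definition triple_roman_number : nat :=
  \big[minn/(4 * #|T|)]_(h : {ffun T -> 'I_5} | is3RDF h) weight h.
End Graph.

Definition ceil_div (a b : nat) : nat := (a + b.-1) %/ b.

From mathcomp Require Import all_boot all_order.
From mathcomp Require Import zify.
Import Order.TTheory.

Set Implicit Arguments.
Unset Strict Implicit.
Unset Printing Implicit Defensive.

(* If h is a 3RDF, a vertex v with h v < 3 has a deficit 3 - h v that its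
   neighbours w must cover with their surpluses h w - 1, and each surplus is
   counted for at most Delta vertices.  Weighting these inequalities suitably
   gives Delta w(h) >= 2p + (Delta - 1) #|{v | h v >= 2}|, and {v | h v >= 2}
   is a dominating set, so it has at least gamma elements.  When some vertex
   is adjacent to all others, putting 4 on it gives a 3RDF of weight 4, which
   is the value of the bound there. *)

Lemma ceil_div_le a b c : 0 < b -> a <= b * c -> ceil_div a b <= c.
Proof. by move=> b_gt0 le_a_bc; rewrite /ceil_div -ltnS ltn_divLR //; nia. Qed.

Lemma ceil_div_gt a b c : 0 < b -> b * c < a -> c < ceil_div a b.
Proof. by move=> b_gt0 lt_bc_a; rewrite /ceil_div leq_divRL //; nia. Qed.

Lemma leq_sum_subset (I : finType) (A B : {pred I}) (F : I -> nat) :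
  {subset A <= B} -> \sum_(i in A) F i <= \sum_(i in B) F i.
Proof. exact: (sub_le_big leqnn (fun m n => leq_addr n m)). Qed.

Section Graph.
Variables (T : finType) (e : rel T).

Lemma deg_le_maxdeg v : deg e v <= maxdeg e.
Proof. exact: (@leq_bigmax T (fun v => deg e v) v). Qed.

Lemma domination_number_le S : dominating e S -> domination_number e <= #|S|.
Proof.
by move=> domS; rewrite /domination_number -minEnat -leEnat; apply: bigmin_le_cond.
Qed.

Lemma domination_number_gt0 : 0 < #|T| -> 0 < domination_number e.
Proof.
move=> T_gt0; have [v _] := card_gt0P T_gt0.
rewrite /domination_number -minEnat -leEnat; apply: le_bigmin => // S.
move=> /forallP /(_ v) /orP [vS | /existsP [w /andP [wS _]]]; apply/card_gt0P.
  by exists v.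
by exists w.
Qed.

Hypotheses (e_sym : symmetric e) (e_irr : irreflexive e).

Lemma maxdeg_le_card : maxdeg e <= #|T|.-1.
Proof.
apply/bigmax_leqP => v _; rewrite -(cardC1 v); apply: subset_leq_card.
by apply/subsetP => w; rewrite !inE; apply: contraTneq => ->; rewrite e_irr.
Qed.

Lemma sum_nbr_le_maxdeg (c : T -> nat) :
  \sum_v \sum_(w in nbr e v) c w <= maxdeg e * \sum_w c w.
Proof.
rewrite (exchange_big_dep predT) //= big_distrr /=; apply: leq_sum => w _.
rewrite (eq_bigl (mem (nbr e w))) => [|v]; last by rewrite !inE e_sym.
by rewrite sum_nat_const leq_mul2r deg_le_maxdeg orbT.
Qed.

Section TripleRomanFunction.
Variable h : {ffun T -> 'I_5}.
Hypothesis h_3RDF : is3RDF e h.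

Lemma is3RDF_deficit v : 3 - h v <= \sum_(w in nbr e v) (h w - 1).
Proof.
have [hv_lt3 | ] := ltnP (h v) 3; last by rewrite -subn_eq0 => /eqP ->.
have := forallP h_3RDF v; rewrite hv_lt3 /= /hsum big_setU1 /=; last first.
  by rewrite !inE e_irr.
have -> : \sum_(w in AN e h v) (h w : nat) =
          \sum_(w in AN e h v) (h w - 1) + #|AN e h v|.
  rewrite -sum1_card -big_split /=; apply: eq_bigr => w.
  by rewrite inE => /andP [_ hw_gt0]; rewrite subnK.
have : \sum_(w in AN e h v) (h w - 1) <= \sum_(w in nbr e v) (h w - 1).
  by apply: leq_sum_subset => w; rewrite inE => /andP [].
lia.
Qed.

Lemma is3RDF_ge2_dominating : dominating e [set v | 2 <= h v].
Proof.
apply/forallP => v; rewrite inE; have [//= | hv_lt2] := leqP 2 (h v).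
apply: contraT => /existsPn no_ge2.
have := is3RDF_deficit v; rewrite big1; first by lia.
move=> w; rewrite inE => vw; have := no_ge2 w; rewrite inE vw andbT -ltnNge.
by move=> hw_lt2; apply/eqP; rewrite subn_eq0 -ltnS.
Qed.

Lemma sum_deficit_le : \sum_v (3 - h v) <= maxdeg e * \sum_v (h v - 1).
Proof.
by apply: leq_trans (sum_nbr_le_maxdeg _); apply: leq_sum => v _; apply: is3RDF_deficit.
Qed.

Lemma card_ge2E : #|[set v | 2 <= h v]| = \sum_v (2 <= h v : nat).
Proof. by rewrite -sum1dep_card big_mkcond. Qed.

Lemma weight_ge_maxdeg_le1 : maxdeg e <= 1 -> 2 * #|T| <= weight h.
Proof.
move=> D_le1.
have deficit2 v : 2 - h v <= \sum_(w in nbr e v) (h w - 2).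
  have : \sum_(w in nbr e v) (h w - 1) <= \sum_(w in nbr e v) (h w - 2) + deg e v.
    by rewrite /deg -sum1_card -big_split /=; apply: leq_sum => w _; lia.
  have := is3RDF_deficit v; have := deg_le_maxdeg v; lia.
have discharge : \sum_v (2 - h v) <= \sum_v (h v - 2).
  apply: (@leq_trans (\sum_v \sum_(w in nbr e v) (h w - 2))).
    by apply: leq_sum => v _; apply: deficit2.
  apply: leq_trans (sum_nbr_le_maxdeg _) _.
  by rewrite -[X in _ <= X]mul1n leq_mul2r D_le1 orbT.
have pointwise : \sum_v (2 + (h v - 2)) <= \sum_v ((h v : nat) + (2 - h v)).
  by apply: leq_sum => v _; lia.
have sum2 : \sum_(v : T) 2 = 2 * #|T| by rewrite sum_nat_const mulnC.
rewrite !big_split /= sum2 -/(weight h) in pointwise; lia.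
Qed.

Lemma weight_ge_maxdeg_ge2 : 2 <= maxdeg e ->
  2 * #|T| + (maxdeg e - 1) * #|[set v | 2 <= h v]| <= maxdeg e * weight h.
Proof.
move=> D_ge2.
(* the deficit bound, weighted by 2/3, dominates vertex by vertex;
   at h v = 3 this needs Delta >= 2 *)
have pointwise : \sum_v (6 + 3 * (maxdeg e - 1) * (2 <= h v) + 2 * maxdeg e * (h v - 1))
                 <= \sum_v (3 * maxdeg e * h v + 2 * (3 - h v)).
  by apply: leq_sum => v _; case: (h v) => [[|[|[|[|[|k]]]]] ?] //=; nia.
have sum6 : \sum_(v : T) 6 = 6 * #|T| by rewrite sum_nat_const mulnC.
rewrite !big_split /= sum6 -!big_distrr /= -card_ge2E -/(weight h) in pointwise.
rewrite big1_eq addn0 in pointwise.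
move: pointwise sum_deficit_le D_ge2.
move: (maxdeg e) (weight h) (\sum_v (h v - 1)) (\sum_v (3 - h v)) #|T| #|[set v | 2 <= h v]|.
by case=> [|D] // w s1 s3 n c; rewrite subSS subn0; nia.
Qed.

Lemma maxdeg_weight_ge : 0 < maxdeg e ->
  2 * #|T| + (maxdeg e - 1) * #|[set v | 2 <= h v]| <= maxdeg e * weight h.
Proof.
move=> D_gt0; have [D_le1 | ] := leqP (maxdeg e) 1; last exact: weight_ge_maxdeg_ge2.
have -> : maxdeg e = 1 by lia.
by rewrite mul0n addn0 mul1n; apply: weight_ge_maxdeg_le1.
Qed.

Lemma ceil_div_le_weight :
  ceil_div (2 * #|T| + (maxdeg e - 1) * domination_number e) (maxdeg e) <= weight h.
Proof.
have [-> | D_gt0] := posnP (maxdeg e); first by rewrite /ceil_div divn0.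
apply: (ceil_div_le D_gt0); apply: leq_trans (maxdeg_weight_ge D_gt0).
by rewrite leq_add2l leq_mul2l (domination_number_le is3RDF_ge2_dominating) orbT.
Qed.

End TripleRomanFunction.

Lemma ceil_div_le_triple_roman_number :
  ceil_div (2 * #|T| + (maxdeg e - 1) * domination_number e) (maxdeg e)
    <= triple_roman_number e.
Proof.
rewrite /triple_roman_number -minEnat -leEnat.
apply: le_bigmin => [|h h_3RDF]; last exact: ceil_div_le_weight.
pose h4 : {ffun T -> 'I_5} := [ffun=> ord_max].
have weight_h4 : weight h4 = 4 * #|T|.
  rewrite /weight (eq_bigr (fun=> 4)) => [|v _]; last by rewrite ffunE.
  by rewrite sum_nat_const mulnC.
by rewrite -weight_h4; apply: ceil_div_le_weight; apply/forallP => v; rewrite ffunE.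
Qed.

Section UniversalVertex.
Variable u : T.
Hypothesis u_univ : forall w, w != u -> e u w.

Lemma triple_roman_number_le4 : triple_roman_number e <= 4.
Proof.
pose h : {ffun T -> 'I_5} := [ffun w => if w == u then ord_max else ord0].
have h_3RDF : is3RDF e h.
  apply/forallP => w; apply/implyP; rewrite ffunE.
  case: eqP => [-> // | /eqP w_neq_u _].
  have -> : AN e h w = [set u].
    apply/setP => x; rewrite !inE ffunE.
    case: eqP => [-> | _]; last by rewrite andbF.
    by rewrite andbT e_sym u_univ.
  by rewrite cards1 /hsum big_setU1 ?inE //= big_set1 !ffunE eqxx (negPf w_neq_u).
have weight_h : weight h = 4.
  rewrite /weight (bigD1 u) //= big1 => [|w /negPf w_neq_u]; by rewrite ffunE ?eqxx ?w_neq_u.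
by rewrite -weight_h /triple_roman_number -minEnat -leEnat; apply: bigmin_le_cond.
Qed.

Lemma ceil_div_ge4 : 2 <= #|T| ->
  4 <= ceil_div (2 * #|T| + (maxdeg e - 1) * domination_number e) (maxdeg e).
Proof.
move=> T_ge2.
have [w w_neq_u] : exists w, w \in predC1 u by apply/card_gt0P; rewrite cardC1; lia.
have D_gt0 : 0 < maxdeg e.
  by apply: leq_trans (deg_le_maxdeg u); apply/card_gt0P; exists w; rewrite inE u_univ.
have := maxdeg_le_card; have := domination_number_gt0 (ltnW T_ge2).
by move=> g_gt0 D_le; apply: (ceil_div_gt D_gt0); nia.
Qed.

End UniversalVertex.
End Graph.

Theorem proposition19 (T : finType) (e : rel T)
  (e_sym : symmetric e) (e_irr : irreflexive e)
  (e_conn : forall x y : T, connect e x y)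
  (p2 : 2 <= #|T|) :
  ceil_div (2 * #|T| + (maxdeg e - 1) * domination_number e) (maxdeg e)
    <= triple_roman_number e
  /\
  ((exists v : T, forall w : T, w != v -> e v w) ->
   triple_roman_number e =
   ceil_div (2 * #|T| + (maxdeg e - 1) * domination_number e) (maxdeg e)).
Proof.
have lower_bound := ceil_div_le_triple_roman_number e_sym e_irr.
split=> // [[u u_univ]]; apply/eqP; rewrite eqn_leq lower_bound andbT.
exact: leq_trans (triple_roman_number_le4 e_sym u_univ) (ceil_div_ge4 e_irr u_univ p2).
Qed.
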